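(* Let $A$ be a synaptic algebra, $p,q\in P$, $c:=(pqp+p^{\perp}q^{\perp}p^{\perp})^{1/2}$ and $s:=(pq^{\perp}p+p^{\perp}qp^{\perp})^{1/2}$. Then: (i) $c^2s^2=pqp+qpq-pqpq-qpqp=p(qp^{\perp}q)p+p^{\perp}(qpq)p^{\perp}=(pqp^{\perp}+p^{\perp}qp)^2$; (ii) $cs=|pqp^{\perp}+p^{\perp}qp|$.
   Context: Synaptic algebra (Foulis): $R$ is a real linear associative algebra with unit $1$, and $A\subseteq R$ is a real linear subspace with $1\in A$. For $a,b\in A$ write $aCb$ iff $ab=ba$; $C(a):=\{b\in A: aCb\}$; $CC(a):=\{b\in A: bCd \text{ for all } d\in C(a)\}$. $A$ is a synaptic algebra with enveloping algebra $R$ iff: (SA1) $A$ is a partially ordered archimedean real linear space with positive cone $A^+$, $1$ is an order unit, $\|\cdot\|$ the order-unit norm; (SA2) $a\in A\Rightarrow a^2\in A^+$; (SA3) $a,b\in A^+\Rightarrow aba\in A^+$; (SA4) if $a\in A$, $b\in A^+$, $aba=0$ then $ab=ba=0$; (SA5) if $a\in A^+$ there is $b\in A^+\cap CC(a)$ with $b^2=a$; (SA6) for $a\in A$ there is $p=p^2\in A$ with $ab=0\Leftrightarrow pb=0$ for all $b\in A$; (SA7) if $1\le a$ there is $b\in A$ with $ab=ba=1$; (SA8) if $a,b\in A$, $a_1\le a_2\le\cdots$ are pairwise commuting elements of $C(b)$ with $\|a-a_n\|\to0$, then $a\in C(b)$. $A$ is nondegenerate. Products are computed in $R$. $P:=\{p\in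 A:p=p^2\}$, $p^{\perp}:=1-p$. For $0\le a$, $a^{1/2}$ is its unique positive square root in $A$; $|a|:=(a^2)^{1/2}$. ($c$ and $s$ commute, so $cs\in A$.) *)

From HB Require Import structures.
From mathcomp Require Import all_boot all_order all_algebra.
From mathcomp Require Import boolp classical_sets reals.
Set Implicit Arguments. Unset Strict Implicit. Unset Printing Implicit Defensive.
Import Order.TTheory GRing.Theory Num.Theory.
Local Open Scope classical_set_scope.
Local Open Scope ring_scope.

Section Synaptic.
Variables (K : realType) (R : algType K).
(* A : the subspace of R, Apos : the positive cone A^+ *)
Variables (A Apos : set R).

Definition sa_le (a b : R) : Prop := Apos (b - a).

Definition sa_C (a : R) : set R := [set b | A b /\ a * b = b * a].
Definition sa_CC (a : R) : set R :=
  [set b | A b /\ forall d, sa_C a d -> b * d = d * b].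

Definition ou_norm (a : R) : K :=
  inf [set l : K | 0 <= l /\ sa_le (- (l *: 1)) a /\ sa_le a (l *: 1)].

Record synaptic_algebra : Prop := {
  sa_sub0 : A 0;
  sa_subD : forall a b, A a -> A b -> A (a + b);
  sa_subZ : forall (k : K) a, A a -> A (k *: a);
  sa_one : A 1;
  sa_pos_sub : forall a, Apos a -> A a;
  sa_pos0 : Apos 0;
  sa_posD : forall a b, Apos a -> Apos b -> Apos (a + b);
  sa_posZ : forall (k : K) a, 0 <= k -> Apos a -> Apos (k *: a);
  sa_pos_anti : forall a, Apos a -> Apos (- a) -> a = 0;
  sa_archimedean : forall a b, A a -> A b ->
      (forall n : nat, sa_le (n%:R *: a) b) -> sa_le a 0;
  sa_order_unit : forall a, A a -> exists n : nat, sa_le a (n%:R *: 1);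
  sa_SA2 : forall a, A a -> Apos (a * a);
  sa_SA3 : forall a b, Apos a -> Apos b -> Apos (a * b * a);
  sa_SA4 : forall a b, A a -> Apos b -> a * b * a = 0 -> a * b = 0 /\ b * a = 0;
  sa_SA5 : forall a, Apos a -> exists b, [/\ Apos b, sa_CC a b & b * b = a];
  sa_SA6 : forall a, A a -> exists p, [/\ A p, p * p = p &
      forall b, A b -> (a * b = 0 <-> p * b = 0)];
  sa_SA7 : forall a, A a -> sa_le 1 a -> exists b, [/\ A b, a * b = 1 & b * a = 1];
  sa_SA8 : forall a b (an : nat -> R), A a -> A b ->
      (forall n, sa_C b (an n)) ->
      (forall n, sa_le (an n) (an n.+1)) ->
      (forall m n, an m * an n = an n * an m) ->
      (forall e : K, 0 < e -> exists N : nat, forall n, (N <= n)%N ->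
          ou_norm (a - an n) < e) ->
      sa_C b a;
  sa_nondeg : (1 : R) != 0
}.

Definition sa_proj : set R := [set p | A p /\ p * p = p].

(* the (unique, by a theorem of Foulis) positive square root a^{1/2} *)
Definition sa_sqrt (a : R) : R := xget 0 [set b | Apos b /\ b * b = a].

Definition sa_abs (a : R) : R := sa_sqrt (a * a).

End Synaptic.

From mathcomp Require Import all_boot all_order all_algebra.
From mathcomp Require Import boolp classical_sets reals.
Set Implicit Arguments. Unset Strict Implicit. Unset Printing Implicit Defensive.
Import GRing.Theory Num.Theory.
Local Open Scope ring_scope.

(* Write [c^2 = cos2 p q] and [s^2 = sin2 p q].  Since [cos2 + sin2 = 1], these
   commute, and a computation with idempotents shows that their product equals
   both [pqp + qpq - pqpq - qpqp] and [x^2] for [x = pq(1-p) + (1-p)qp].  Positive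
   square roots are unique, and the root of [a] lies in [CC(a)]; hence the root
   is multiplicative on commuting positive elements, and
   [cs = (c^2 s^2)^(1/2) = (x^2)^(1/2) = |x|]. *)

Section Idempotent.
Variables (R : pzRingType) (e : R).
Hypothesis ee : e * e = e.

Lemma idem_compl : (1 - e) * (1 - e) = 1 - e.
Proof. by rewrite mulrBr mulr1 mulrBl mul1r ee subrr subr0. Qed.

Lemma mul_idem_compl : e * (1 - e) = 0.
Proof. by rewrite mulrBr mulr1 ee subrr. Qed.

Lemma mul_compl_idem : (1 - e) * e = 0.
Proof. by rewrite mulrBl mul1r ee subrr. Qed.

Lemma idem_sandwich_compl x : e * (1 - x) * (1 - e) = - (e * x * (1 - e)).
Proof. by rewrite (mulrBr e) mulr1 mulrBl mul_idem_compl sub0r. Qed.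

Lemma compl_sandwich_idem x : (1 - e) * (1 - x) * e = - ((1 - e) * x * e).
Proof. by rewrite (mulrBr (1 - e)) mulr1 mulrBl mul_compl_idem sub0r. Qed.

Lemma mulr_idem x : x * e * e = x * e.
Proof. by rewrite -mulrA ee. Qed.

Lemma mulr_idem_compl x : x * e * (1 - e) = 0.
Proof. by rewrite -mulrA mul_idem_compl mulr0. Qed.

Lemma mulr_compl_idem x : x * (1 - e) * e = 0.
Proof. by rewrite -mulrA mul_compl_idem mulr0. Qed.

Lemma idem_compress f : f * f = f ->
  e * f * e * (1 - f) * e = e * f * (1 - e) * f * e.
Proof.
move=> ff.
have -> : e * f * e * (1 - f) * e = e * f * e - e * f * e * f * e.
  by rewrite mulrBr mulr1 mulrBl mulr_idem.
by rewrite mulrBr mulr1 !mulrBl -(mulrA e f f) ff.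
Qed.

Lemma sandwich_compl y :
  (1 - e) * (1 - y) * e * (1 - y) * (1 - e) = (1 - e) * y * e * y * (1 - e).
Proof.
have -> : (1 - e) * (1 - y) * e * (1 - y) * (1 - e)
    = ((1 - e) * (1 - y) * e) * (e * (1 - y) * (1 - e)) by rewrite !mulrA mulr_idem.
by rewrite compl_sandwich_idem idem_sandwich_compl mulrNN !mulrA mulr_idem.
Qed.

End Idempotent.

Section TwoIdempotents.
Variables (R : pzRingType) (p q : R).
Hypotheses (pp : p * p = p) (qq : q * q = q).

Definition cos2 := p * q * p + (1 - p) * (1 - q) * (1 - p).
Definition sin2 := p * (1 - q) * p + (1 - p) * q * (1 - p).
Definition offdiag := p * q * (1 - p) + (1 - p) * q * p.

Let pp' := idem_compl pp.
Let qq' := idem_compl qq.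

Ltac simpl_idem :=
  rewrite !mulrA ?(mulr_idem pp) ?(mulr_idem pp') ?(mulr_idem_compl pp)
    ?(mulr_compl_idem pp) ?mul0r ?add0r ?addr0.

Lemma cos2_add_sin2 : cos2 + sin2 = 1.
Proof.
rewrite /cos2 /sin2 addrACA -mulrDl -mulrDr -mulrDl -mulrDr.
by rewrite (addrC q) !subrK !mulr1 pp pp' (addrC p) subrK.
Qed.

Lemma cos2_sin2_comm : cos2 * sin2 = sin2 * cos2.
Proof.
have -> : sin2 = 1 - cos2 by rewrite -cos2_add_sin2 addrC addKr.
by rewrite mulrBr mulrBl mulr1 mul1r.
Qed.

Lemma cos2_mul_sin2 :
  cos2 * sin2 = p * (q * (1 - p) * q) * p + (1 - p) * (q * p * q) * (1 - p).
Proof.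
rewrite /cos2 /sin2 mulrDl (mulrDr (p * q * p)) (mulrDr ((1 - p) * (1 - q) * (1 - p))).
simpl_idem; rewrite idem_compress //.
have := idem_compress pp' qq'; rewrite !subKr => ->.
by rewrite sandwich_compl.
Qed.

Lemma offdiag_sqr :
  offdiag ^+ 2 = p * (q * (1 - p) * q) * p + (1 - p) * (q * p * q) * (1 - p).
Proof.
rewrite /offdiag expr2 mulrDl (mulrDr (p * q * (1 - p))) (mulrDr ((1 - p) * q * p)).
by simpl_idem.
Qed.

Lemma pqp_qpq_blocks :
  p * q * p + q * p * q - p * q * p * q - q * p * q * p
  = p * (q * (1 - p) * q) * p + (1 - p) * (q * p * q) * (1 - p).
Proof.
have -> : p * (q * (1 - p) * q) * p = p * q * p - p * q * p * q * p.
  by rewrite !mulrA !(mulrBr, mulrBl, mulr1, mul1r) (mulr_idem qq).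
have -> : (1 - p) * (q * p * q) * (1 - p)
    = (q * p * q - p * q * p * q) - (q * p * q * p - p * q * p * q * p).
  by rewrite !mulrA mulrBr mulr1 !mulrBl !mul1r.
move: (q * p * q) (p * q * p) (q * p * q * p) (p * q * p * q) (p * q * p * q * p).
move=> b a d c e.
by rewrite opprB !addrA (addrAC a (- e) b) (addrAC (a + b) (- e) (- c)) subrK.
Qed.

End TwoIdempotents.

Section SynapticAlgebra.
Variables (K : realType) (R : algType K) (A Apos : set R).
Hypothesis SA : synaptic_algebra A Apos.
Local Notation sqrt := (sa_sqrt Apos).

Lemma sa_subB a b : A a -> A b -> A (a - b).
Proof.
by move=> Aa Ab; rewrite -scaleN1r; apply: (sa_subD SA) => //; apply: (sa_subZ SA).
Qed.

Lemma sa_subM_comm a b : A a -> A b -> a * b = b * a -> A (a * b).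
Proof.
move=> Aa Ab ab.
have polar : (a + b) * (a + b) - a * a - b * b = (2%:R : K) *: (a * b).
  rewrite scaler_nat mulrDl !mulrDr -ab mulr2n.
  by rewrite addrA [LHS]addrAC addrK [LHS]addrAC (addrC (a * a)) addrK.
have sq_in x : A x -> A (x * x) by move=> Ax; apply: (sa_pos_sub SA); apply: (sa_SA2 SA).
have : A ((2%:R : K) *: (a * b)).
  rewrite -polar; apply: sa_subB; [apply: sa_subB|]; apply: sq_in => //.
  exact: (sa_subD SA).
move/(sa_subZ SA 2%:R^-1); rewrite scalerA mulVf ?scale1r //.
by rewrite pnatr_eq0.
Qed.

Lemma sa_pos1 : Apos 1.
Proof. by rewrite -(mulr1 1); apply: (sa_SA2 SA); apply: (sa_one SA). Qed.

Lemma sa_proj_pos p : sa_proj A p -> Apos p.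
Proof. by move=> [Ap pp]; rewrite -pp; apply: (sa_SA2 SA). Qed.

Lemma sa_proj_compl p : sa_proj A p -> sa_proj A (1 - p).
Proof.
move=> [Ap pp]; split; last exact: idem_compl pp.
by apply: sa_subB => //; apply: (sa_one SA).
Qed.

Lemma sa_sqr_eq0 d : A d -> d * d = 0 -> d = 0.
Proof.
move=> Ad dd; have d1d : d * 1 * d = 0 by rewrite mulr1.
by have [] := sa_SA4 SA Ad sa_pos1 d1d; rewrite mulr1.
Qed.

Lemma sa_sqr_add_eq0 x y : A x -> A y -> x * x + y * y = 0 -> x = 0 /\ y = 0.
Proof.
move=> Ax Ay /eqP; rewrite addr_eq0 => /eqP xx.
have yy : y * y = 0.
  by apply: (sa_pos_anti SA); [apply: (sa_SA2 SA)|rewrite -xx; apply: (sa_SA2 SA)].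
by split; apply: sa_sqr_eq0 => //; rewrite xx yy oppr0.
Qed.

(* With [u, v] the roots of [b, r] from (SA5) and [d = b - r]:
   [(u d)^2 + (v d)^2 = (b + r) d^2 = (b^2 - r^2) d = 0], so [u d = v d = 0]
   and [d^2 = u (u d) - v (v d) = 0]. *)
Lemma sa_pos_sqr_inj b r :
  Apos b -> Apos r -> b * r = r * b -> b * b = r * r -> b = r.
Proof.
move=> Pb Pr br bbrr.
have Ab := sa_pos_sub SA Pb; have Ar := sa_pos_sub SA Pr.
have [u [_ [Au CCu] uu]] := sa_SA5 SA Pb.
have [v [_ [Av CCv] vv]] := sa_SA5 SA Pr.
pose d := b - r; have Ad : A d := sa_subB Ab Ar.
have ud : u * d = d * u.
  by rewrite /d mulrBr mulrBl -{1 2}uu mulrA (CCu r (conj Ar br)).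
have vd : v * d = d * v.
  by rewrite /d mulrBr mulrBl -{1 2}vv mulrA (CCv b (conj Ab (esym br))).
have sqr x : x * d = d * x -> (x * d) * (x * d) = (x * x) * (d * d).
  by move=> xd; rewrite -mulrA (mulrA d x d) -xd -!mulrA.
have bd0 : (b + r) * d = 0 by rewrite mulrDl !mulrBr bbrr br addrA subrK subrr.
have [ud0 vd0] : u * d = 0 /\ v * d = 0.
  apply: sa_sqr_add_eq0; try exact: sa_subM_comm.
  by rewrite (sqr u ud) (sqr v vd) uu vv -mulrDl mulrA bd0 mul0r.
have dd : d * d = 0 by rewrite {1}/d mulrBl -uu -vv -!mulrA ud0 vd0 !mulr0 subr0.
by apply/eqP; rewrite -subr_eq0 -/d (sa_sqr_eq0 Ad dd).
Qed.

Lemma sa_sqrtP a : Apos a -> Apos (sqrt a) /\ sqrt a * sqrt a = a.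
Proof.
move=> Pa; have [b [Pb _ bb]] := sa_SA5 SA Pa.
by apply: (@xgetPex _ 0 [set b | Apos b /\ b * b = a]); exists b.
Qed.

Lemma sa_sqrt_unique a b : Apos b -> b * b = a -> sqrt a = b.
Proof.
move=> Pb bba.
have Pa : Apos a by rewrite -bba; apply: (sa_SA2 SA); apply: (sa_pos_sub SA).
have [r [Pr [_ CCr] rr]] := sa_SA5 SA Pa.
have root_eq x : Apos x -> x * x = a -> x = r.
  move=> Px xx; apply: sa_pos_sqr_inj; rewrite ?xx ?rr //.
  by apply: esym; apply: CCr; split; [apply: (sa_pos_sub SA)|rewrite -xx mulrA].
have [Ps ss] := sa_sqrtP Pa.
by rewrite (root_eq _ Ps ss) (root_eq _ Pb bba).
Qed.

Lemma sa_sqrt_comm a b : Apos a -> A b -> a * b = b * a -> sqrt a * b = b * sqrt a.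
Proof.
move=> Pa Ab ab; have [r [Pr [_ CCr] rr]] := sa_SA5 SA Pa.
by rewrite (sa_sqrt_unique Pr rr); apply: CCr.
Qed.

(* [a b = w b w] for the square root [w] of [a], which commutes with [b]. *)
Lemma sa_posM_comm a b : Apos a -> Apos b -> a * b = b * a -> Apos (a * b).
Proof.
move=> Pa Pb ab; have [Pw ww] := sa_sqrtP Pa.
have wb := sa_sqrt_comm Pa (sa_pos_sub SA Pb) ab.
by rewrite -ww -mulrA wb mulrA; apply: (sa_SA3 SA).
Qed.

Lemma sa_sqrtM a b : Apos a -> Apos b -> a * b = b * a -> sqrt a * sqrt b = sqrt (a * b).
Proof.
move=> Pa Pb ab.
have [Pu uu] := sa_sqrtP Pa; have [Pv vv] := sa_sqrtP Pb.
have ub : sqrt a * b = b * sqrt a := sa_sqrt_comm Pa (sa_pos_sub SA Pb) ab.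
have uv : sqrt b * sqrt a = sqrt a * sqrt b.
  by apply: sa_sqrt_comm => //; apply: (sa_pos_sub SA).
apply/esym/sa_sqrt_unique; first exact: sa_posM_comm.
by rewrite -mulrA (mulrA (sqrt b)) uv -!mulrA vv mulrA uu.
Qed.

End SynapticAlgebra.

Theorem theorem5p2 (K : realType) (R : algType K) (A Apos : set R)
    (SA : synaptic_algebra A Apos) (p q : R) :
  sa_proj A p -> sa_proj A q ->
  let c := sa_sqrt Apos (p * q * p + (1 - p) * (1 - q) * (1 - p)) in
  let s := sa_sqrt Apos (p * (1 - q) * p + (1 - p) * q * (1 - p)) in
  [/\ c * c * (s * s) = p * q * p + q * p * q - p * q * p * q - q * p * q * p,
      p * q * p + q * p * q - p * q * p * q - q * p * q * p
        = p * (q * (1 - p) * q) * p + (1 - p) * (q * p * q) * (1 - p),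
      p * (q * (1 - p) * q) * p + (1 - p) * (q * p * q) * (1 - p)
        = (p * q * (1 - p) + (1 - p) * q * p) ^+ 2
    & c * s = sa_abs Apos (p * q * (1 - p) + (1 - p) * q * p)].
Proof.
move=> Pp Pq c s; have [_ pp] := Pp; have [_ qq] := Pq.
have [Pp' Pq'] := (sa_proj_compl SA Pp, sa_proj_compl SA Pq).
have Pcos2 : Apos (cos2 p q).
  by apply: (sa_posD SA); apply: (sa_SA3 SA); apply: (sa_proj_pos SA).
have Psin2 : Apos (sin2 p q).
  by apply: (sa_posD SA); apply: (sa_SA3 SA); apply: (sa_proj_pos SA).
have [_ cc] := sa_sqrtP SA Pcos2; have [_ ss] := sa_sqrtP SA Psin2.
split.
- by rewrite cc ss cos2_mul_sin2 // pqp_qpq_blocks.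
- exact: pqp_qpq_blocks.
- by rewrite offdiag_sqr.
- rewrite /c /s -/(cos2 p q) -/(sin2 p q).
  rewrite (sa_sqrtM SA Pcos2 Psin2 (cos2_sin2_comm q pp)) cos2_mul_sin2 //.
  by rewrite -(offdiag_sqr q pp) expr2.
Qed.
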